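(* Let $a<b$ be real numbers with $\frac{a+b}{2}>0$, let $\mathcal D=U(a,b)$, and let $(N,u)\sim H(n,\mathcal D)$ be a random additively separable hedonic game. Then $$\lim_{n\to\infty}\mathbb P\big((N,u)\text{ admits a Nash-stable partition}\big)=1.$$
   Context: Additively separable hedonic game: a finite agent set $N$ and utilities $u_x(y)\in\mathbb R$ for ordered pairs $x\ne y$; for a coalition $C\ni x$, $u_x(C)=\sum_{y\in C\setminus\{x\}}u_x(y)$ (singleton has utility $0$). Random model $H(n,\mathcal D)$: $|N|=n$ and all $u_x(y)$, $x\ne y$, i.i.d. from $\mathcal D$. A partition $\pi$ of $N$ is Nash-stable if no agent $x$ can strictly increase its utility by moving alone to another coalition of $\pi$ or to a new singleton coalition. *)

From HB Require Import structures.
From mathcomp Require Import all_boot all_order all_algebra.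
From mathcomp Require Import all_classical all_reals all_analysis.
Set Implicit Arguments. Unset Strict Implicit. Unset Printing Implicit Defensive.
Import Order.TTheory GRing.Theory Num.Theory.
Local Open Scope classical_set_scope.
Local Open Scope ring_scope.

(* u x y = u_x(y); diagonal values u x x are never used. *)
(* Utility of agent x for the coalition C ∪ {x}:  sum_{y in C \ {x}} u_x(y). *)
Definition coal_util (n : nat) (R : numDomainType) (u : 'I_n -> 'I_n -> R)
  (x : 'I_n) (C : {set 'I_n}) : R :=
  \sum_(y in C :\ x) u x y.

(* P is a Nash-stable partition of N = 'I_n: no agent x can strictly gain by
   moving alone to another coalition C of P (utility coal_util u x C), or to a
   new singleton coalition (utility 0). *)
Definition nash_stable (n : nat) (R : numDomainType) (u : 'I_n -> 'I_n -> R)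
  (P : {set {set 'I_n}}) : Prop :=
  finset.partition P [set: 'I_n] /\
  forall x : 'I_n,
    0 <= coal_util u x (finset.pblock P x) /\
    forall C, C \in P -> coal_util u x C <= coal_util u x (finset.pblock P x).

Definition admits_nash_stable (n : nat) (R : numDomainType)
  (u : 'I_n -> 'I_n -> R) : Prop :=
  exists P : {set {set 'I_n}}, nash_stable u P.

Definition offdiag (n : nat) : seq ('I_n * 'I_n) :=
  [seq p <- enum [set: 'I_n * 'I_n] | p.1 != p.2].

(* The utility function encoded by a sample vector s (one coordinate per
   ordered pair x <> y). *)
Definition util_of (n : nat) (R : numDomainType) (s : seq R) :
  'I_n -> 'I_n -> R :=
  fun x y => nth 0 s (index (x, y) (offdiag n)).

(* Expectation of f(X_1, ..., X_m) for X_1, ..., X_m i.i.d. uniform on [a,b]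
   (iterated integral against the library's uniform distribution, i.e. the
   integral against the m-fold product measure). *)
Fixpoint iid_uniform_expect (R : realType) (a b : R) (ab : a < b) (m : nat)
  (f : seq R -> \bar R) {struct m} : \bar R :=
  match m with
  | 0 => f [::]
  | m'.+1 => (\int[uniform_prob ab]_x
                 iid_uniform_expect ab m' (fun s => f (x :: s)))%E
  end.

Definition prob_nash_stable (R : realType) (a b : R) (ab : a < b) (n : nat)
  : \bar R :=
  iid_uniform_expect ab (size (offdiag n))
    (fun s => (\1_[set s' : seq R | admits_nash_stable (@util_of n R s')] s)%:E).

From HB Require Import structures.
From mathcomp Require Import all_boot all_order all_algebra.
From mathcomp Require Import all_classical all_reals all_analysis.
From mathcomp Require Import ring lra measurable_realfun.

(* The grand coalition is Nash-stable as soon as every agent x has a nonnegative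
   total utility S_x = sum_{y <> x} u_x(y), a sum of n - 1 independent U(a, b)
   samples.  By Chernoff, P(S_x < 0) <= phi(t)^(n-1) with phi(t) = E[exp(-t X)],
   and phi(t) < 1 for small t > 0 because E[X] = (a + b) / 2 > 0; a union bound
   over the n agents gives a probability at least 1 - n phi(t)^(n-1) -> 1.
   Since the probability is an iterated integral, the two bounds are combined
   into a pointwise minorant 1 - sum_x prod_{y <> x} exp(-t u_x(y)) of the
   indicator, whose iterated integral factorizes. *)

Set Implicit Arguments. Unset Strict Implicit. Unset Printing Implicit Defensive.
Import Order.TTheory GRing.Theory Num.Theory.
Import numFieldNormedType.Exports.
Local Open Scope classical_set_scope.
Local Open Scope ring_scope.

Lemma le_integral_ge0_upper d (T : measurableType d) (R : realType)
    (mu : {measure set T -> \bar R}) (f g : T -> \bar R) :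
  (forall x, f x <= g x)%E -> (forall x, 0 <= g x)%E ->
  (\int[mu]_x f x <= \int[mu]_x g x)%E.
Proof.
move=> fg g0; rewrite integralE.
apply: (@le_trans _ _ (\int[mu]_x f^\+ x - 0)%E).
  by apply: leeB => //; apply: integral_ge0 => x _; exact: funeneg_ge0.
rewrite sube0 (ge0_integralTE _ g0) ge0_integralTE => [|x]; last exact: funepos_ge0.
apply: ereal_sup_le => _ [h /= hf <-]; exists h => //= x.
by apply: le_trans (hf x) _; rewrite funeposE ge_max g0 fg.
Qed.

Section iid_uniform.
Variables (R : realType) (a b : R) (ab : a < b).
Local Notation mu := (uniform_prob ab).
Local Notation E := (iid_uniform_expect ab).

Lemma iid_uniform_expect_ge0 m (f : seq R -> \bar R) :
  (forall s, 0 <= f s)%E -> (0 <= E m f)%E.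
Proof.
elim: m f => [|m IH] f f0 /=; first exact: f0.
by apply: integral_ge0 => x _; apply: IH.
Qed.

Lemma le_iid_uniform_expect m (f g : seq R -> \bar R) :
  (forall s, f s <= g s)%E -> (forall s, 0 <= g s)%E -> (E m f <= E m g)%E.
Proof.
elim: m f g => [|m IH] f g fg g0 /=; first exact: fg.
apply: le_integral_ge0_upper => x; first exact: IH.
exact: iid_uniform_expect_ge0.
Qed.

Lemma iid_uniform_expect1 m : E m (fun _ => 1%E) = 1%E.
Proof.
elim: m => [|m IH] //=.
by rewrite IH integral_cst //= mul1e probability_setT.
Qed.

Definition bounded_measurable (f : R -> R) : Prop :=
  measurable_fun setT f /\ exists M, forall x, `|f x| <= M.

Definition uniform_mean (f : R -> R) : R := fine (\int[mu]_x (f x)%:E)%E.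

Lemma bounded_measurable_integrable f :
  bounded_measurable f -> mu.-integrable setT (EFin \o f).
Proof.
move=> [mf [M fM]]; apply: measurable_bounded_integrable => //.
  by rewrite (le_lt_trans (probability_le1 _ measurableT)) ?ltry.
exists M; split; first exact: num_real.
by move=> y /ltW My x _; exact: le_trans (fM x) My.
Qed.

Lemma integral_uniform_sum K (c : 'I_K -> R) (g : 'I_K -> R -> R) :
  (forall k, bounded_measurable (g k)) ->
  (\int[mu]_x (\sum_(k < K) c k * g k x)%:E =
   (\sum_(k < K) c k * uniform_mean (g k))%:E)%E.
Proof.
move=> gb; have gi k := bounded_measurable_integrable (gb k).
under eq_integral do rewrite -sumEFin.
rewrite integral_sum //; last first.
  move=> k; have := integrableZl measurableT (c k) (gi k).
  by apply: eq_integrable => // x _ /=; rewrite EFinM.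
rewrite -sumEFin; apply: eq_bigr => k _.
under eq_integral do rewrite EFinM.
rewrite (integralZl measurableT (gi k)) /uniform_mean EFinM fineK //.
exact: integrable_fin_num (gi k).
Qed.

Definition sum_prod K (c : 'I_K -> R) (h : 'I_K -> nat -> R -> R) m (s : seq R)
    : R :=
  \sum_(k < K) c k * \prod_(i < m) h k i (nth 0 s i).

Lemma iid_uniform_expect_sum_prod m K (c : 'I_K -> R) (h : 'I_K -> nat -> R -> R) :
  (forall k i, bounded_measurable (h k i)) ->
  E m (fun s => (sum_prod c h m s)%:E) =
  (\sum_(k < K) c k * \prod_(i < m) uniform_mean (h k i))%:E.
Proof.
elim: m K c h => [|m IH] K c h hb /=.
  by congr EFin; apply: eq_bigr => k _; rewrite !big_ord0.
under eq_integral => x _.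
  have -> : (fun s => (sum_prod c h m.+1 (x :: s))%:E) =
      (fun s => (sum_prod (fun k => c k * h k 0%N x) (fun k i => h k i.+1) m s)%:E).
    apply: funext => s; congr EFin; apply: eq_bigr => k _.
    by rewrite big_ord_recl mulrA.
  rewrite IH //.
  have -> : \sum_(k < K) c k * h k 0%N x * \prod_(i < m) uniform_mean (h k i.+1) =
      \sum_(k < K) (c k * \prod_(i < m) uniform_mean (h k i.+1)) * h k 0%N x.
    by apply: eq_bigr => k _; ring.
  over.
rewrite integral_uniform_sum //; congr EFin; apply: eq_bigr => k _.
by rewrite big_ord_recl; ring.
Qed.

End iid_uniform.

Lemma expR_le_quadratic (R : realType) (y : R) :
  y <= 1 / 2 -> expR y <= 1 + y + 2 * y ^+ 2.
Proof.
move=> y_le; have y1 : 0 < 1 - y by lra.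
rewrite -[y]opprK expRN opprK; apply: (@le_trans _ _ (1 - y)^-1).
  by rewrite lef_pV2 ?posrE ?expR_gt0 // -[1 - y]/(1 + - y) expR_ge1Dx.
by rewrite -[_^-1]mul1r ler_pdivrMr //; nra.
Qed.

Lemma integral_deriv_horner (R : realType) (P : {poly R}) (a b : R) : a < b ->
  (\int[lebesgue_measure]_(x in `[a, b]) (P^`()).[x]%:E = (P.[b] - P.[a])%:E)%E.
Proof.
move=> ab; rewrite (@continuous_FTC2 _ _ (horner P)) //.
- exact/continuous_subspaceT/continuous_horner.
- split; first by move=> z _; exact: derivable_horner.
  + by apply: cvg_at_right_filter; exact: continuous_horner.
  + by apply: cvg_at_left_filter; exact: continuous_horner.
- by move=> x _; rewrite -derivE.
Qed.

Lemma integral_itv_affine (R : realType) (a b c t : R) : a < b ->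
  (\int[lebesgue_measure]_(x in `[a, b]) (c - t * x)%:E =
   ((b - a) * (c - t * ((a + b) / 2)))%:E)%E.
Proof.
move=> ab; pose P : {poly R} := c *: 'X - (t / 2) *: 'X^2.
have PE x : P.[x] = c * x - t / 2 * x ^+ 2 by rewrite !hornerE.
have P'E x : (P^`()).[x] = c - t * x.
  by rewrite /P derivB !derivZ derivX derivXn !hornerE; field.
under eq_integral do rewrite -P'E.
by rewrite integral_deriv_horner // !PE; congr EFin; field.
Qed.

Lemma normr_le_itv (R : realDomainType) (a b x : R) :
  a <= x <= b -> `|x| <= `|a| + `|b|.
Proof.
move=> /andP[ax xb]; rewrite ler_norml.
have := ler_norm b; have := ler_norm (- a); rewrite normrN.
by have := normr_ge0 a; have := normr_ge0 b; lra.
Qed.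

Section uniform_laplace.
Variables (R : realType) (a b : R) (ab : a < b).
Local Notation mu := (uniform_prob ab).
Local Notation mean := (uniform_mean ab).

(* Truncated to [a, b] so that it is bounded; this does not change its mean. *)
Definition trunc_expN (t x : R) : R := \1_`[a, b] x * expR (- (t * x)).

Lemma bounded_measurable_indic_itv : bounded_measurable \1_`[a, b].
Proof.
split; first exact: measurable_indic.
by exists 1 => x; rewrite indicE; case: (_ \in _); rewrite ?normr1 ?normr0.
Qed.

Lemma trunc_expN_ge0 t x : 0 <= trunc_expN t x.
Proof. by rewrite mulr_ge0 ?indicE ?expR_ge0. Qed.

Lemma bounded_measurable_trunc_expN t : bounded_measurable (trunc_expN t).
Proof.
split.
  apply: measurable_funM; first exact: measurable_indic.
  apply: continuous_measurable_fun => x.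
  apply: continuous_comp; last exact: continuous_expR.
  have -> : (fun x : R => - (t * x)) = horner ((- t) *: 'X).
    by apply: funext => y; rewrite !hornerE mulNr.
  exact: continuous_horner.
exists (expR (`|t| * (`|a| + `|b|))) => x; rewrite ger0_norm ?trunc_expN_ge0 //.
rewrite /trunc_expN indicE; case: (boolP (x \in _)) => [xab|_]; last first.
  by rewrite mul0r expR_ge0.
rewrite mul1r ler_expR; apply: le_trans (ler_norm _) _.
rewrite normrN normrM ler_wpM2l // normr_le_itv //.
by move: xab; rewrite inE /= in_itv.
Qed.

Lemma uniform_mean_indic_itv : mean \1_`[a, b] = 1.
Proof.
rewrite /uniform_mean integral_indic //= setIT.
by rewrite /uniform_prob integral_uniform_pdf1.
Qed.

Lemma uniform_mean_trunc_expN_ge0 t : 0 <= mean (trunc_expN t).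
Proof.
by apply: fine_ge0; apply: integral_ge0 => x _; rewrite lee_fin trunc_expN_ge0.
Qed.

Lemma uniform_mean_trunc_expN_le t : 0 <= t -> t * (`|a| + `|b|) <= 1 / 2 ->
  mean (trunc_expN t) <= 1 - t * ((a + b) / 2) + 2 * (t * (`|a| + `|b|)) ^+ 2.
Proof.
set M := `|a| + `|b|; set c := 1 + 2 * (t * M) ^+ 2 => t0 tM.
have [mt _] := bounded_measurable_trunc_expN t.
have le_affine : (\int[mu]_x (trunc_expN t x)%:E <= (c - t * ((a + b) / 2))%:E)%E.
  have ba : 0 < b - a by rewrite subr_gt0.
  rewrite integral_uniform; first last.
  - by move=> x; rewrite lee_fin trunc_expN_ge0.
  - exact/measurable_EFinP.
  have -> : c - t * ((a + b) / 2) =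
            (b - a)^-1 * ((b - a) * (c - t * ((a + b) / 2))).
    by field; rewrite lt0r_neq0.
  rewrite EFinM; apply: lee_wpmul2l; first by rewrite lee_fin invr_ge0 ltW.
  rewrite -integral_itv_affine //.
  apply: ge0_le_integral => //.
  - by move=> x _; rewrite lee_fin trunc_expN_ge0.
  - exact/measurable_EFinP/measurable_funTS.
  - apply/measurable_EFinP/measurable_funTS; apply: continuous_measurable_fun.
    have -> : (fun x : R => c - t * x) = horner (c%:P - t *: 'X).
      by apply: funext => y; rewrite !hornerE.
    exact: continuous_horner.
  - move=> x /= xab; rewrite lee_fin /trunc_expN indicE mem_set // mul1r.
    have := normr_le_itv xab; rewrite -/M ler_norml => /andP[Mx xM].
    have txM : - (t * x) <= 1 / 2 by nra.
    have tx_le_tM : 0 <= (t * t) * ((M - x) * (M + x)).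
      by rewrite !mulr_ge0 //; lra.
    by apply: le_trans (expR_le_quadratic txM) _; rewrite /c sqrrN !expr2; nra.
have fin : (\int[mu]_x (trunc_expN t x)%:E)%E \is a fin_num.
  apply/integrable_fin_num/bounded_measurable_integrable => //.
  exact: bounded_measurable_trunc_expN.
by rewrite /uniform_mean -lee_fin fineK // (le_trans le_affine) // lee_fin /c; lra.
Qed.

Lemma exists_uniform_mean_trunc_expN_lt1 :
  0 < (a + b) / 2 -> exists2 t, 0 < t & mean (trunc_expN t) < 1.
Proof.
set mu0 := (a + b) / 2; set M := `|a| + `|b| => mu0_gt0.
have mu0M : mu0 <= M.
  rewrite /mu0 /M; have := ler_norm a; have := ler_norm b.
  by have := normr_ge0 a; have := normr_ge0 b; lra.
have M_gt0 : 0 < M by apply: lt_le_trans mu0M.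
set r := mu0 / M; have r_gt0 : 0 < r by rewrite divr_gt0.
have r_le1 : r <= 1 by rewrite ler_pdivrMr // mul1r.
set t := mu0 / (4 * M ^+ 2).
have tM : t * M = r / 4 by rewrite /t /r; field; rewrite lt0r_neq0.
have tmu0 : t * mu0 = r ^+ 2 / 4 by rewrite /t /r; field; rewrite lt0r_neq0.
have t_gt0 : 0 < t by rewrite divr_gt0 // mulr_gt0 // exprn_gt0.
exists t => //; apply: le_lt_trans (uniform_mean_trunc_expN_le (ltW t_gt0) _) _.
  by rewrite tM; lra.
by rewrite -/mu0 -/M tM tmu0; nra.
Qed.

End uniform_laplace.

Lemma grand_coalition_nash_stable n (R : numDomainType) (u : 'I_n -> 'I_n -> R) :
  (forall x, 0 <= coal_util u x [set: 'I_n]%SET) -> admits_nash_stable u.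
Proof.
case: n u => [|n] u u_ge0.
  exists finset.set0; split => [|[]//].
  have -> : [set: 'I_0]%SET = finset.set0 by apply/setP => -[].
  by rewrite partition_set0.
set T := [set: 'I_n.+1]%SET.
have T_neq0 : T != finset.set0 by apply/set0Pn; exists ord0.
exists [set T]%SET; split.
  rewrite /finset.partition finset.trivIset1 finset.cover1 eqxx.
  by rewrite finset.in_set1 eq_sym T_neq0.
move=> x; have -> : finset.pblock [set T]%SET x = T.
  apply: finset.def_pblock; rewrite ?finset.in_set1 ?finset.in_setT //.
  exact: finset.trivIset1.
by split => // C; rewrite finset.in_set1 => /eqP ->.
Qed.

(* The agent x of the i-th pair (x, y) of offdiag n, whose utility u_x(y) is
   the i-th sample; the junk value n when i is out of range. *)
Definition row_index (n i : nat) : nat := nth n [seq val p.1 | p <- offdiag n] i.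

Lemma offdiag_uniq n : uniq (offdiag n).
Proof. by rewrite filter_uniq // enum_uniq. Qed.

Lemma coal_util_setT n (R : numDomainType) (s : seq R) (x : 'I_n) :
  coal_util (util_of s) x [set: 'I_n]%SET =
  \sum_(i < size (offdiag n) | row_index n i == x) nth 0 s i.
Proof.
pose F p := nth 0 s (index p (offdiag n)).
transitivity (\sum_(p <- offdiag n | p.1 == x) F p); last first.
  rewrite (big_nth (x, x)) big_mkord; apply: eq_big => i.
    by rewrite /row_index (nth_map (x, x)).
  by move=> _; rewrite /F index_uniq // offdiag_uniq.
rewrite big_filter_cond big_enum_cond /= /coal_util.
transitivity (\sum_(i | i == x) \sum_(j | i != j) F (i, j)).
  by rewrite big_pred1_eq; apply: eq_bigl => y; rewrite !inE andbT eq_sym.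
by rewrite pair_big_dep; apply: eq_big => [[i j]|[]] //=; rewrite in_setT andbC.
Qed.

Lemma card_row_index n (x : 'I_n) :
  #|[pred i : 'I_(size (offdiag n)) | row_index n i == x]| = n.-1.
Proof.
pose ones := nseq (size (offdiag n)) (1 : int).
have := coal_util_setT ones x; rewrite /coal_util.
under eq_bigr => y /setD1P[yx _].
  rewrite /util_of nth_nseq index_mem mem_filter /= mem_enum in_setT andbT.
  rewrite eq_sym yx.
  over.
under [in RHS]eq_bigr => i _ do rewrite nth_nseq ltn_ord.
rewrite !sumr_const => /eqP; rewrite eqr_nat => /eqP <-.
have := cardsD1 x [set: 'I_n]%SET; rewrite finset.in_setT cardsT card_ord.
by rewrite add1n => /(congr1 predn) ->.
Qed.

Section nash_minorant.
Variables (R : realType) (a b : R) (ab : a < b) (t : R) (n : nat).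
Local Notation m := (size (offdiag n)).

Definition row_expN (s : seq R) (x : 'I_n) : R :=
  \prod_(i < m | row_index n i == x) expR (- (t * nth 0 s i)).

(* The union bound over agents combined with Chernoff's bound
   1_{S < 0} <= exp (- t S); the box factor keeps every factor bounded. *)
Definition nash_minorant (s : seq R) : R :=
  (\prod_(i < m) \1_`[a, b] (nth 0 s i)) * (1 - \sum_(x < n) row_expN s x).

Lemma nash_minorant_le_indic s : 0 < t ->
  ((nash_minorant s)%:E <=
   (\1_[set s' | admits_nash_stable (@util_of n R s')] s)%:E)%E.
Proof.
move=> t_gt0; rewrite /nash_minorant; set A := \prod_(i < m) _.
have A_ge0 : 0 <= A by apply: prodr_ge0 => i _; rewrite indicE.
have A_le1 : A <= 1.
  apply: prodr_ile1 => i _; rewrite indicE.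
  by case: (_ \in _); rewrite ?lexx ?ler01.
have E_ge0 x : 0 <= row_expN s x by apply: prodr_ge0 => i _; exact: expR_ge0.
have [sumE_ge1|sumE_lt1] := leP 1 (\sum_(x < n) row_expN s x).
  apply: (@le_trans _ _ 0%:E); last by rewrite lee_fin indicE.
  by rewrite lee_fin mulr_ge0_le0 // subr_le0.
have stable : admits_nash_stable (@util_of n R s).
  apply: grand_coalition_nash_stable => x; rewrite coal_util_setT.
  have : row_expN s x < 1.
    apply: le_lt_trans sumE_lt1; rewrite (bigD1 x) //= lerDl.
    exact: sumr_ge0.
  rewrite /row_expN -expR_sum expR_lt1 sumrN -mulr_sumr oppr_lt0.
  by rewrite pmulr_rgt0 // => /ltW.
have sumE_ge0 : 0 <= \sum_(x < n) row_expN s x by exact: sumr_ge0.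
rewrite indicE mem_set // lee_fin.
by apply: le_trans A_le1; rewrite ler_piMr //; lra.
Qed.

(* nash_minorant as a sum_prod: term 0 is the box, term x.+1 is minus the box
   times row_expN x. *)
Let coef (k : 'I_n.+1) : R := if k == ord0 then 1 else -1.

Let factor (k : 'I_n.+1) (i : nat) : R -> R :=
  if (0 < k)%N && (row_index n i == k.-1) then trunc_expN a b t else \1_`[a, b].

Lemma nash_minorant_sum_prod s : nash_minorant s = sum_prod coef factor m s.
Proof.
rewrite /nash_minorant /sum_prod big_ord_recl /coef /= mul1r.
rewrite mulrBr mulr1 mulr_sumr -sumrN.
congr (_ + _); apply: eq_bigr => x _; rewrite mulN1r /row_expN.
congr (- _); rewrite [X in _ * X]big_mkcond -big_split /=.
by apply: eq_bigr => i _; rewrite /factor /=; case: ifP; rewrite ?mulr1.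
Qed.

Lemma iid_uniform_expect_nash_minorant :
  iid_uniform_expect ab m (fun s => (nash_minorant s)%:E) =
  (1 - n%:R * uniform_mean ab (trunc_expN a b t) ^+ n.-1)%:E.
Proof.
under eq_fun do rewrite nash_minorant_sum_prod.
rewrite iid_uniform_expect_sum_prod => [|k i]; last first.
  rewrite /factor; case: ifP => _.
    exact: bounded_measurable_trunc_expN.
  exact: bounded_measurable_indic_itv.
congr EFin; rewrite big_ord_recl /coef /= mul1r.
rewrite big1 => [|i _]; last by rewrite /factor /= uniform_mean_indic_itv.
under eq_bigr => x _.
  rewrite (eq_bigr (fun i : 'I_m => if row_index n i == x
                    then uniform_mean ab (trunc_expN a b t) else 1)); last first.
    by move=> i _; rewrite /factor /=; case: ifP; rewrite ?uniform_mean_indic_itv.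
  rewrite -big_mkcond prodr_const card_row_index.
  over.
by rewrite sumr_const card_ord -mulr_natl; ring.
Qed.

End nash_minorant.

Lemma binomial_term_le (R : numDomainType) (x y : R) n i : (i <= n)%N ->
  0 <= x -> 0 <= y -> (x ^+ (n - i) * y ^+ i) *+ 'C(n, i) <= (x + y) ^+ n.
Proof.
rewrite -ltnS => lt_in x_ge0 y_ge0; rewrite exprDn (bigD1 (Ordinal lt_in)) //=.
by rewrite lerDl sumr_ge0 // => j _; rewrite mulrn_wge0 // mulr_ge0 // exprn_ge0.
Qed.

(* The i = 2 term of the binomial expansion of (q + (1 - q)) ^+ n.+1 = 1. *)
Lemma natr_mul_expr_le (R : realFieldType) (q : R) n : 0 <= q <= 1 ->
  n%:R * q ^+ n.-1 * (1 - q) ^+ 2 <= 2 / n.+1%:R.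
Proof.
case: n => [|n] /andP[q_ge0 q_le1]; first by rewrite !mul0r divr_ge0.
have q'_ge0 : 0 <= 1 - q by rewrite subr_ge0.
have := binomial_term_le (isT : (2 <= n.+2)%N) q_ge0 q'_ge0.
rewrite subrKC expr1n -mulr_natr subSS subn1 /= => le1.
have binE : (n.+1 * n.+2)%:R = 2 * 'C(n.+2, 2)%:R :> R.
  by rewrite -natrM -mul_bin_diag bin1 mulnC.
rewrite ler_pdivlMr ?ltr0n //.
have -> : n.+1%:R * q ^+ n * (1 - q) ^+ 2 * n.+2%:R =
          2 * (q ^+ n * (1 - q) ^+ 2 * 'C(n.+2, 2)%:R) :> R.
  by rewrite -[RHS]mulrCA -binE natrM; ring.
by rewrite ler_piMr.
Qed.

Lemma cvg_natr_mul_expr (R : realType) (q : R) : 0 <= q < 1 ->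
  n%:R * q ^+ n.-1 @[n --> \oo] --> 0.
Proof.
move=> /andP[q_ge0 q_lt1].
have q'_gt0 : 0 < (1 - q) ^+ 2 by rewrite exprn_gt0 // subr_gt0.
apply: (@squeeze_cvgr _ _ _ _ (fun=> 0) (fun n => 2 / (1 - q) ^+ 2 * harmonic n)).
- apply: nearW => n; rewrite mulr_ge0 ?exprn_ge0 //= mulrAC ler_pdivlMr //.
  by apply: natr_mul_expr_le; rewrite q_ge0 ltW.
- exact: cvg_cst.
- by rewrite -(mulr0 (2 / (1 - q) ^+ 2)); apply: cvgMr; exact: cvg_harmonic.
Qed.

Lemma prob_nash_stable_le1 (R : realType) (a b : R) (ab : a < b) n :
  (prob_nash_stable ab n <= 1)%E.
Proof.
rewrite -(iid_uniform_expect1 ab (size (offdiag n))).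
by apply: le_iid_uniform_expect => s //; rewrite lee_fin indicE; case: (_ \in _).
Qed.

Lemma prob_nash_stable_ge (R : realType) (a b : R) (ab : a < b) t n : 0 < t ->
  ((1 - n%:R * uniform_mean ab (trunc_expN a b t) ^+ n.-1)%:E <=
   prob_nash_stable ab n)%E.
Proof.
move=> t_gt0; rewrite -iid_uniform_expect_nash_minorant.
apply: le_iid_uniform_expect => s; first exact: nash_minorant_le_indic.
by rewrite lee_fin indicE.
Qed.

Unset Implicit Arguments.

Theorem proposition3 (R : realType) (a b : R) (ab : a < b) (hpos : 0 < (a + b) / 2) :
  prob_nash_stable ab n @[n --> \oo] --> 1%E.
Proof.
have [t t_gt0 q_lt1] := exists_uniform_mean_trunc_expN_lt1 ab hpos.
have q_ge0 := uniform_mean_trunc_expN_ge0 ab t.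
set q := uniform_mean ab (trunc_expN a b t) in q_lt1 q_ge0.
apply: (@squeeze_cvge _ _ _ _ (fun n => (1 - n%:R * q ^+ n.-1)%:E) _ (fun=> 1%E)).
- by apply: nearW => n; rewrite prob_nash_stable_ge // prob_nash_stable_le1.
- apply: cvg_EFin; first exact: nearW.
  rewrite -[X in _ --> X]subr0; apply: cvgB; first exact: cvg_cst.
  by apply: cvg_natr_mul_expr; rewrite q_ge0.
- exact: cvg_cst.
Qed.
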